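(* Let $D$ be an integral domain with quotient field $K$, let $L$ be a field extension of $K$, and let $R=D+XL[X]$ and $R'=D+XL[[X]]$, where $X$ is an indeterminate. (1) If $D$ is a field, then $R$ and $R'$ are completely atomic domains. (2) If $D$ is not a field and $D$ is atomic, then $R$ and $R'$ are completely atomic domains.
   Context: An atom (irreducible element) of an integral domain is a nonzero nonunit $a$ such that $a=bc$ implies $b$ or $c$ is a unit. A nonzero nonunit is atomic if it is a finite product of atoms; a domain is atomic if every nonzero nonunit is atomic. A domain is completely atomic if every nonunit divisor of an atomic element is atomic. *)

From HB Require Import structures.
From mathcomp Require Import all_boot all_order all_algebra.
Set Implicit Arguments. Unset Strict Implicit. Unset Printing Implicit Defensive.
Import GRing.Theory.
Local Open Scope ring_scope.

(* Units, atoms, divisibility are all computed INSIDE S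
   (witnesses must lie in S), so these are the notions of the domain S. *)
Section AtomicNotions.
Variables (T : Type) (mul : T -> T -> T) (one zero : T) (S : T -> Prop).

Definition unitIn (u : T) : Prop := S u /\ exists v, S v /\ mul u v = one.

Definition atomIn (a : T) : Prop :=
  [/\ S a, a <> zero, ~ unitIn a &
      forall b c, S b -> S c -> a = mul b c -> unitIn b \/ unitIn c].

Fixpoint allAtoms (s : seq T) : Prop :=
  if s is x :: s' then atomIn x /\ allAtoms s' else True.

Definition atomicElt (a : T) : Prop :=
  [/\ S a, a <> zero, ~ unitIn a &
      exists s : seq T, s <> [::] /\ allAtoms s /\ a = foldr mul one s].

Definition atomicDom : Prop :=
  forall a, S a -> a <> zero -> ~ unitIn a -> atomicElt a.

Definition completelyAtomic : Prop :=
  forall a b c, atomicElt a -> S b -> S c -> a = mul b c -> ~ unitIn b ->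
    atomicElt b.
End AtomicNotions.

Definition pseries (L : fieldType) := nat -> L.
Definition ps_mul (L : fieldType) (f g : pseries L) : pseries L :=
  fun n => \sum_(i < n.+1) f i * g (n - i)%N.
Definition ps_one (L : fieldType) : pseries L := fun n => if n == 0%N then 1 else 0.
Definition ps_zero (L : fieldType) : pseries L := fun _ => 0.

(* R = D + X L[X] : polynomials over L with constant term in D *)
Definition inDXLX (L : fieldType) (D : {pred L}) (p : {poly L}) : Prop := p`_0 \in D.
(* R' = D + X L[[X]] : power series over L with constant term in D *)
Definition inDXLXX (L : fieldType) (D : {pred L}) (f : pseries L) : Prop := f 0%N \in D.

Definition subfield_of (L : fieldType) (D : {pred L}) : Prop :=
  forall x, x \in D -> x != 0 -> x^-1 \in D.

(* Write ct f for the constant term. If D is a field, the units of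
   D + XL[X] are the nonzero constants and those of D + XL[[X]] the series with
   ct f != 0, so in a factorisation into nonunits the degree, resp. the order,
   of each factor drops, and induction shows both rings are atomic.
   If D is not a field, pick x in D with x^-1 \notin D: every f with ct f = 0
   factors as x * (x^-1 f) into nonunits, so atoms, atomic elements and all
   their divisors b have ct b != 0. If ct b is a unit of D, induction on the
   degree applies to b; otherwise b = ct b * (ct b^-1 b), where ct b is a
   product of atoms of D, which stay atoms, and ct b^-1 b has constant term 1,
   so it is a unit or, by the same induction, a product of atoms. *)

From HB Require Import structures.
From mathcomp Require Import all_boot all_order all_algebra.
From mathcomp Require Import zify.
From Stdlib Require Import Classical FunctionalExtensionality.
Set Implicit Arguments. Unset Strict Implicit. Unset Printing Implicit Defensive.
Import GRing.Theory.
Local Open Scope ring_scope.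

Section MonoidAtomicity.
Variables (T : Type) (mul : T -> T -> T) (one zero : T) (S : T -> Prop).
Hypotheses (mulA : associative mul) (mulC : commutative mul)
  (mul1 : left_id one mul) (mul0 : left_zero zero mul)
  (SM : forall x y, S x -> S y -> S (mul x y)).

Local Notation unit := (unitIn mul one S).
Local Notation atom := (atomIn mul one zero S).
Local Notation atomic := (atomicElt mul one zero S).
Local Notation atoms := (allAtoms mul one zero S).

Lemma unitIn_mull a b : S a -> S b -> unit (mul a b) -> unit a.
Proof.
move=> Sa Sb [_ [w [Sw abw]]]; split=> //.
by exists (mul b w); split; [exact: SM | rewrite mulA].
Qed.

Lemma foldr_mul_cat s1 s2 :
  foldr mul one (s1 ++ s2) = mul (foldr mul one s1) (foldr mul one s2).
Proof. by elim: s1 => [|x s IH] /=; rewrite ?mul1 // IH mulA. Qed.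

Lemma allAtoms_cat s1 s2 : atoms s1 -> atoms s2 -> atoms (s1 ++ s2).
Proof. by elim: s1 => [|x s IH] //= [? ?] ?; split => //; apply: IH. Qed.

Lemma atom_atomic a : atom a -> atomic a.
Proof.
move=> Aa; case: (Aa) => Sa a0 ua _; split=> //.
by exists [:: a]; split=> //=; rewrite mulC mul1.
Qed.

Lemma atomicM a b : atomic a -> atomic b -> mul a b <> zero -> atomic (mul a b).
Proof.
move=> [Sa _ ua [s [s0 [As aE]]]] [Sb _ _ [t [_ [At bE]]]] ab0.
split=> //; first exact: SM.
- by move/(unitIn_mull Sa Sb).
- exists (s ++ t); split; first by case: s s0 {As aE}.
  by split; [exact: allAtoms_cat | rewrite foldr_mul_cat aE bE].
Qed.

Lemma atomMu a u : atom a -> unit u -> atom (mul a u).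
Proof.
move=> [Sa a0 ua Aa] [Su [v [Sv uv]]].
have auvK : mul (mul a u) v = a by rewrite -mulA uv mulC mul1.
split.
- exact: SM.
- by move=> au0; apply: a0; rewrite -auvK au0 mul0.
- by move/(unitIn_mull Sa Su).
- move=> b c Sb Sc aubc.
  have : a = mul b (mul c v) by rewrite -auvK aubc mulA.
  case/(Aa _ _ Sb (SM Sc Sv)) => [|ucv]; [by left | right].
  exact: unitIn_mull Sc Sv ucv.
Qed.

Lemma atomicMu a u : atomic a -> unit u -> atomic (mul a u).
Proof.
move=> [Sa a0 ua [s [s0 [As aE]]]] Uu; case: (Uu) => Su [v [Sv uv]].
case: s s0 As aE => [//|x s] _ [Ax As] aE.
have auvK : mul (mul a u) v = a by rewrite -mulA uv mulC mul1.
split.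
- exact: SM.
- by move=> au0; apply: a0; rewrite -auvK au0 mul0.
- by move/(unitIn_mull Sa Su).
- exists (mul x u :: s); split=> //; split; first by split=> //; exact: atomMu.
  by rewrite aE /= -mulA (mulC (foldr _ _ _)) mulA.
Qed.

Lemma nonatom_factor a : S a -> a <> zero -> ~ unit a -> ~ atom a ->
  exists b c, [/\ a = mul b c, S b, S c, ~ unit b & ~ unit c].
Proof.
move=> Sa a0 ua nAa; apply: NNPP => nfact; apply: nAa; split=> // b c Sb Sc abc.
by apply: NNPP => /not_or_and [ub uc]; apply: nfact; exists b, c.
Qed.

Lemma atomic_by_descent (Q : nat -> T -> Prop) :
  (forall n b c, Q n (mul b c) -> S b -> S c -> mul b c <> zero ->
     ~ unit b -> ~ unit c -> exists2 m, (m < n)%N & Q m b) ->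
  forall n f, Q n f -> S f -> f <> zero -> ~ unit f -> atomic f.
Proof.
move=> descent n; elim/ltn_ind: n => n IH f Qf Sf f0 uf.
have [Af | nAf] := classic (atom f); first exact: atom_atomic.
have [b [c [fE Sb Sc ub uc]]] := nonatom_factor Sf f0 uf nAf.
have bc0 : mul b c <> zero by rewrite -fE.
have cb0 : mul c b <> zero by rewrite mulC -fE.
have [m mn Qb] : exists2 m, (m < n)%N & Q m b.
  by apply: (descent n b c) => //; rewrite -fE.
have [k kn Qc] : exists2 k, (k < n)%N & Q k c.
  by apply: (descent n c b) => //; rewrite mulC -fE.
rewrite fE; apply: atomicM => //.
- by apply: IH mn _ Qb Sb _ ub => b0; apply: bc0; rewrite b0 mul0.
- by apply: IH kn _ Qc Sc _ uc => c0; apply: cb0; rewrite c0 mul0.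
Qed.

Lemma completelyAtomic_of_atomicDom :
  atomicDom mul one zero S -> completelyAtomic mul one zero S.
Proof.
move=> atomicS a b c [_ a0 _ _] Sb _ abc ub; apply: atomicS => // b0.
by apply: a0; rewrite abc b0 mul0.
Qed.

End MonoidAtomicity.

Section PowerSeriesMonoid.
Variable L : fieldType.
Implicit Types (f g h : pseries L) (P Q : {poly L}).

Lemma ps_mul_coef_polyM f g n P Q :
  (forall i, (i <= n)%N -> f i = P`_i) -> (forall i, (i <= n)%N -> g i = Q`_i) ->
  ps_mul f g n = (P * Q)`_n.
Proof.
move=> fP gQ; rewrite coefM; apply: eq_bigr => i _.
by rewrite fP ?gQ ?leq_subr // -ltnS.
Qed.

Definition ps_trunc n f : {poly L} := \poly_(i < n.+1) f i.

Lemma coef_ps_trunc n f i : (i <= n)%N -> (ps_trunc n f)`_i = f i.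
Proof. by move=> le_in; rewrite coef_poly ltnS le_in. Qed.

Lemma ps_mul_trunc n f g i : (i <= n)%N ->
  ps_mul f g i = (ps_trunc n f * ps_trunc n g)`_i.
Proof.
by move=> le_in; apply: ps_mul_coef_polyM => j le_ji; rewrite coef_ps_trunc ?(leq_trans le_ji).
Qed.

Lemma ps_mulA : associative (@ps_mul L).
Proof.
move=> f g h; apply: functional_extensionality => n.
rewrite (@ps_mul_coef_polyM _ _ n (ps_trunc n f) (ps_trunc n g * ps_trunc n h)).
- rewrite (@ps_mul_coef_polyM _ _ n (ps_trunc n f * ps_trunc n g) (ps_trunc n h)) ?mulrA //.
    by move=> i; exact: ps_mul_trunc.
  by move=> i /coef_ps_trunc ->.
- by move=> i /coef_ps_trunc ->.
- by move=> i; exact: ps_mul_trunc.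
Qed.

Lemma ps_mulC : commutative (@ps_mul L).
Proof.
move=> f g; apply: functional_extensionality => n.
by rewrite !(ps_mul_trunc _ _ (leqnn n)) mulrC.
Qed.

Lemma ps_mul1 : left_id (ps_one L) (@ps_mul L).
Proof.
move=> f; apply: functional_extensionality => n.
rewrite (@ps_mul_coef_polyM _ _ n 1 (ps_trunc n f)) ?mul1r ?coef_ps_trunc //.
  by move=> i _; rewrite coef1 /ps_one; case: (i == 0)%N.
by move=> i /coef_ps_trunc ->.
Qed.

Lemma ps_mul0 : left_zero (ps_zero L) (@ps_mul L).
Proof.
move=> f; apply: functional_extensionality => n.
by rewrite /ps_mul big1 // => i _; rewrite mul0r.
Qed.

Lemma ps_mul_coef0 f g : ps_mul f g 0 = f 0%N * g 0%N.
Proof. by rewrite /ps_mul big_ord1. Qed.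

Lemma ps_mul_coef_eq0 f g n :
  g 0%N = 0 -> (forall i, (i < n)%N -> f i = 0) -> ps_mul f g n = 0.
Proof.
move=> g0 f_lt_n; rewrite /ps_mul big_ord_recr /= subnn g0 mulr0 addr0.
by rewrite big1 // => i _; rewrite f_lt_n ?mul0r.
Qed.

Lemma ps_coef_neq0 f : f <> ps_zero L -> exists n, f n != 0.
Proof.
move=> f0; apply: NNPP => fE; apply: f0; apply: functional_extensionality => n.
by apply/eqP/negPn/negP => fn; apply: fE; exists n.
Qed.

Definition psC (x : L) : pseries L := fun n => if n == 0%N then x else 0.

Lemma ps_mulCl x f n : ps_mul (psC x) f n = x * f n.
Proof.
rewrite /ps_mul big_ord_recl subn0 big1 ?addr0 // => i _.
by rewrite /psC mul0r.
Qed.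

Lemma psCM x y : psC (x * y) = ps_mul (psC x) (psC y).
Proof.
apply: functional_extensionality => n.
by rewrite ps_mulCl /psC; case: (n == 0)%N; rewrite ?mulr0.
Qed.

(* [ps_inv_coef f k n] is the n-th coefficient of 1/f, computed with recursion
   fuel k; it is correct as soon as n <= k. *)
Fixpoint ps_inv_coef f (k n : nat) : L :=
  if k is k'.+1 then
    if n == 0%N then (f 0%N)^-1 else
      - (f 0%N)^-1 * \sum_(i < n) f i.+1 * ps_inv_coef f k' (n - i.+1)
  else (f 0%N)^-1.

Lemma ps_inv_coef_fuel f k k' n :
  (n <= k)%N -> (n <= k')%N -> ps_inv_coef f k n = ps_inv_coef f k' n.
Proof.
elim: k k' n => [|k IH] k' n.
  by rewrite leqn0 => /eqP -> _; case: k'.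
case: n => [|n] le_nk le_nk'; first by case: k' le_nk'.
case: k' le_nk' => [//|k'] le_nk' /=.
congr (_ * _); apply: eq_bigr => i _; congr (_ * _).
by apply: IH; rewrite subSS (leq_trans (leq_subr _ _)).
Qed.

Definition psinv f : pseries L := fun n => ps_inv_coef f n n.

Lemma ps_mulV f : f 0%N != 0 -> ps_mul f (psinv f) = ps_one L.
Proof.
move=> f0; apply: functional_extensionality => -[|n].
  by rewrite ps_mul_coef0 /psinv /= mulfV.
rewrite /ps_mul big_ord_recl subn0 /psinv /= mulrA mulrN mulfV // mulN1r.
rewrite [X in - X + _](_ : _ = \sum_(i < n.+1)
    f (bump 0 i) * ps_inv_coef f (n.+1 - bump 0 i) (n.+1 - bump 0 i)).
  by rewrite addNr.
apply: eq_bigr => i _; rewrite /bump add1n subSS.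
by congr (_ * _); apply: ps_inv_coef_fuel; rewrite ?leq_subr.
Qed.

End PowerSeriesMonoid.

Lemma ltn_size_mulr (R : idomainType) (p q : {poly R}) :
  p != 0 -> (1 < size q)%N -> (size p < size (p * q)%R)%N.
Proof.
move=> p0 q_gt1; have q0 : q != 0 by rewrite -size_poly_gt0 ltnW.
by rewrite size_mul //; move: p0; rewrite -size_poly_gt0; lia.
Qed.

Section DPlusXL.
Variables (L : fieldType) (D : {pred L}) (DR : GRing.subring_closed D).
HB.instance Definition _ := GRing.isSubringClosed.Build L D DR.

Local Notation DS := (fun x : L => x \in D).
Local Notation Dunit := (unitIn *%R 1 DS).
Local Notation Datom := (atomIn *%R 1 0 DS).

Lemma Dunit1 : Dunit 1.
Proof. by split; [exact: rpred1 | exists 1; rewrite mulr1 rpred1]. Qed.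

Lemma Dunit_mull x y : x \in D -> y \in D -> Dunit (x * y) -> Dunit x.
Proof. exact: (unitIn_mull (@mulrA L) (@rpredM _ D)). Qed.

Section ConstantTerm.
Variables (T : Type) (mul : T -> T -> T) (one zero : T) (S : T -> Prop).
Variables (ct : T -> L) (C : L -> T).
Hypotheses (mulA : associative mul) (mulC : commutative mul)
  (mul1 : left_id one mul) (mul0 : left_zero zero mul).
Hypotheses (ctM : forall f g, ct (mul f g) = ct f * ct g) (ctC : cancel C ct)
  (CM : {morph C : x y / x * y >-> mul x y}) (C1 : C 1 = one).
Hypothesis inSE : forall f, S f = (ct f \in D).

Local Notation unit := (unitIn mul one S).
Local Notation atom := (atomIn mul one zero S).
Local Notation atomic := (atomicElt mul one zero S).

Let SM f g : S f -> S g -> S (mul f g).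
Proof. by rewrite !inSE ctM; exact: rpredM. Qed.

Let ct1 : ct one = 1. Proof. by rewrite -C1 ctC. Qed.

Let ct0 : ct zero = 0. Proof. by rewrite -(mul0 (C 0)) ctM ctC mulr0. Qed.

Let ct_neq0 f : ct f != 0 -> f <> zero.
Proof. by move=> f0 fz; move: f0; rewrite fz ct0 eqxx. Qed.

Let CVK x f : x != 0 -> mul (C x) (mul (C x^-1) f) = f.
Proof. by move=> x0; rewrite mulA -CM mulfV // C1 mul1. Qed.

Lemma unitIn_ct f : unit f -> Dunit (ct f).
Proof.
case=> + [g [+ fg]]; rewrite !inSE => fD gD.
by split=> //; exists (ct g); rewrite -ctM fg ct1.
Qed.

(* For x in D with x^-1 \notin D, a = x * (x^-1 a) factors a into nonunits
   when ct a = 0. *)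
Lemma atom_ct_neq0 a : ~ subfield_of D -> atom a -> ct a != 0.
Proof.
move=> nfD [_ _ _ Aa]; apply/eqP => a0.
have [x [xD x0 xVD]] : exists x, [/\ x \in D, x != 0 & x^-1 \notin D].
  apply: NNPP => noinv; apply: nfD => x xD x0.
  by apply/negPn/negP => xVD; apply: noinv; exists x.
have SCx : S (C x) by rewrite inSE ctC.
have SxVa : S (mul (C x^-1) a) by rewrite inSE ctM a0 mulr0 rpred0.
case: (Aa _ _ SCx SxVa (esym (CVK a x0))) => /unitIn_ct [_ [w [wD]]].
- by rewrite ctC => xw; move: wD; rewrite -(mulKf x0 w) xw mulr1 (negbTE xVD).
- by rewrite ctM a0 mulr0 mul0r => /eqP; rewrite eq_sym oner_eq0.
Qed.

Lemma atomic_ct_neq0 a : ~ subfield_of D -> atomic a -> ct a != 0.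
Proof.
move=> nfD [_ _ _ [s [_ [As ->]]]]; elim: s As => [|x s IH] /=.
  by rewrite ct1 oner_eq0.
by case=> Ax As; rewrite ctM mulf_neq0 ?IH ?atom_ct_neq0.
Qed.

Hypothesis unit_of_constant_factor : forall b c d,
  S b -> S c -> mul b c = C d -> d != 0 -> Dunit (ct b) -> unit b.

Lemma atom_C d : Datom d -> atom (C d).
Proof.
move=> [dD d0 ud Ad]; have d0' : d != 0 by apply/eqP.
split.
- by rewrite inSE ctC.
- by apply: ct_neq0; rewrite ctC.
- by move/unitIn_ct; rewrite ctC.
- move=> b c Sb Sc dbc.
  have dE : d = ct b * ct c by rewrite -ctM -dbc ctC.
  have := Sb; have := Sc; rewrite !inSE => cD bD.
  case: (Ad _ _ bD cD dE) => [ub | uc]; [left | right].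
    exact: unit_of_constant_factor Sb Sc (esym dbc) d0' ub.
  by apply: (unit_of_constant_factor Sc Sb _ d0' uc); rewrite dbc mulC.
Qed.

Lemma atomic_C x : atomicDom *%R 1 0 DS -> x \in D -> x != 0 -> ~ Dunit x ->
  atomic (C x).
Proof.
move=> atomicD xD x0 ux.
have [_ _ _ [s [s0 [As xE]]]] := atomicD x xD (elimN eqP x0) ux.
split.
- by rewrite inSE ctC.
- by apply: ct_neq0; rewrite ctC.
- by move/unitIn_ct; rewrite ctC.
exists (map C s); split; first by case: s s0 {As xE}.
rewrite xE; split; elim: s {s0 xE} As => [|y s IH] //= [Ay As].
- by split; [exact: atom_C | exact: IH].
- by rewrite CM IH.
Qed.

Theorem completelyAtomic_of_ct :
  ~ subfield_of D -> atomicDom *%R 1 0 DS ->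
  (forall f, S f -> ~ unit f -> Dunit (ct f) -> atomic f) ->
  completelyAtomic mul one zero S.
Proof.
move=> nfD atomicD atomic_ct_unit a b c Aa Sb Sc abc ub.
have ctb0 : ct b != 0.
  move: (atomic_ct_neq0 nfD Aa); rewrite abc ctM.
  by apply: contraNneq => ->; rewrite mul0r.
have [ubD | nubD] := classic (Dunit (ct b)); first exact: atomic_ct_unit.
have bD : ct b \in D by rewrite -inSE.
set h := mul (C (ct b)^-1) b.
have bE : b = mul (C (ct b)) h by rewrite CVK.
have h1 : ct h = 1 by rewrite ctM ctC mulVf.
have Sh : S h by rewrite inSE h1 rpred1.
have Cb := atomic_C atomicD bD ctb0 nubD.
rewrite bE; have [uh | nuh] := classic (unit h).
  exact: (atomicMu mulA mulC mul1 mul0 SM).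
apply: (atomicM mulA mul1 SM) => //.
  by apply: atomic_ct_unit; rewrite // h1; exact: Dunit1.
by rewrite -bE; exact: ct_neq0.
Qed.

End ConstantTerm.

Local Notation PS := (inDXLX D).
Local Notation Punit := (unitIn *%R 1 PS).
Local Notation Patomic := (atomicElt *%R 1 0 PS).

Let polySM p q : PS p -> PS q -> PS (p * q).
Proof. by rewrite /inDXLX coef0M; exact: rpredM. Qed.

Let inDXLXE p : PS p = (p`_0 \in D). Proof. by []. Qed.

Let coef0C : cancel (@polyC L) (fun p => p`_0). Proof. exact: polyCK. Qed.

Lemma poly_unitP p : PS p -> Punit p <-> (size p <= 1)%N /\ Dunit p`_0.
Proof.
move=> Sp; split=> [Up | [sp [_ [x [xD px]]]]].
  have Up0 := unitIn_ct (ct := fun q : {poly L} => q`_0)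
    (@coef0M L) coef0C (@polyC1 L) inDXLXE Up.
  case: Up => _ [q [_ pq]]; split=> //.
  by move/eqP: (size_poly1 L); rewrite -pq size_mul_eq1 => /andP[/eqP -> _].
split=> //; exists x%:P; split; first by rewrite /inDXLX coefC.
by rewrite (size1_polyC sp) -polyCM px.
Qed.

Lemma poly_atomic_of_small_units (P : {poly L} -> Prop) :
  (forall b c, P (b * c) -> PS b -> PS c -> P b) ->
  (forall p, P p -> PS p -> p != 0 -> (size p <= 1)%N -> Punit p) ->
  forall p, P p -> PS p -> p <> 0 -> ~ Punit p -> Patomic p.
Proof.
move=> P_factor P_unit p Pp.
apply: (atomic_by_descent (@mulrA _) (@mulrC _) (@mul1r _) (@mul0r _) polySM
  (Q := fun n p => size p = n /\ P p)) (conj erefl Pp).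
move=> {p Pp} n b c [sbc Pbc] Sb Sc bc0 ub uc.
have b0 : b != 0 by apply/eqP; apply: contra_not bc0 => ->; rewrite mul0r.
have c0 : c != 0 by apply/eqP; apply: contra_not bc0 => ->; rewrite mulr0.
have Pc : P c by apply: P_factor Sc Sb; rewrite mulrC.
have sc : (1 < size c)%N.
  by rewrite ltnNge; apply/negP => sc1; exact: uc (P_unit c Pc Sc c0 sc1).
exists (size b); last by split=> //; exact: P_factor Pbc Sb Sc.
by rewrite -sbc ltn_size_mulr.
Qed.

Lemma poly_atomicDom_of_subfield : subfield_of D -> atomicDom *%R 1 0 PS.
Proof.
move=> fD p Sp p0 up; apply: (poly_atomic_of_small_units (P := fun=> True)) => //.
move=> q _ Sq q0 sq.
have q0_neq0 : q`_0 != 0 by move: q0; rewrite {1}(size1_polyC sq) polyC_eq0.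
apply/poly_unitP => //; split=> //; split=> //.
by exists (q`_0)^-1; split; [exact: fD | exact: mulfV].
Qed.

Lemma poly_unit_of_constant_factor b c d :
  PS b -> PS c -> b * c = d%:P -> d != 0 -> Dunit b`_0 -> Punit b.
Proof.
move=> Sb _ bcd d0 ub; apply/poly_unitP => //; split=> //.
have c0 : c != 0 by apply: contraNneq d0 => c0; rewrite -polyC_eq0 -bcd c0 mulr0.
rewrite leqNgt; apply/negP => b_gt1.
have := ltn_size_mulr c0 b_gt1.
by rewrite mulrC bcd size_polyC d0 ltnS leqn0 size_poly_eq0 (negbTE c0).
Qed.

Lemma poly_atomic_of_unit_coef0 p : PS p -> ~ Punit p -> Dunit p`_0 -> Patomic p.
Proof.
move=> Sp up up0; apply: (poly_atomic_of_small_units (P := fun p => Dunit p`_0)) => //.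
- by move=> b c + Sb Sc; rewrite coef0M; exact: Dunit_mull.
- by move=> q uq0 Sq _ sq; apply/poly_unitP.
- by case: up0 => _ [w [_]] + p0; rewrite p0 coef0 mul0r => /eqP; rewrite eq_sym oner_eq0.
Qed.

Theorem poly_completelyAtomic_of_subfield :
  subfield_of D -> completelyAtomic *%R 1 0 PS.
Proof.
move=> fD; apply: (completelyAtomic_of_atomicDom (@mul0r _)).
exact: poly_atomicDom_of_subfield.
Qed.

Theorem poly_completelyAtomic_of_atomicDom :
  ~ subfield_of D -> atomicDom *%R 1 0 DS -> completelyAtomic *%R 1 0 PS.
Proof.
move=> nfD atomicD.
exact: (completelyAtomic_of_ct (@mulrA _) (@mulrC _) (@mul1r _) (@mul0r _)
  (@coef0M L) coef0C (@polyCM L) (@polyC1 L) inDXLXE poly_unit_of_constant_factor nfD atomicD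
  poly_atomic_of_unit_coef0).
Qed.

Local Notation SS := (inDXLXX D).
Local Notation Sunit := (unitIn (@ps_mul L) (ps_one L) SS).

Let psSM f g : SS f -> SS g -> SS (ps_mul f g).
Proof. by rewrite /inDXLXX ps_mul_coef0; exact: rpredM. Qed.

Let inDXLXXE f : SS f = (f 0%N \in D). Proof. by []. Qed.

Let psCK : cancel (@psC L) (fun f => f 0%N). Proof. by []. Qed.

Let psC1 : psC 1 = ps_one L. Proof. by []. Qed.

Lemma ps_unitP f : SS f -> Sunit f <-> Dunit (f 0%N).
Proof.
move=> Sf; split; first exact: (unitIn_ct (@ps_mul_coef0 L) psCK psC1 inDXLXXE).
case=> _ [w [wD fw]].
have f0 : f 0%N != 0 by apply: contra_eq_neq fw => ->; rewrite mul0r eq_sym oner_eq0.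
split=> //; exists (psinv f); split; last exact: ps_mulV.
by move: wD; rewrite -(mulKf f0 w) fw mulr1.
Qed.

Lemma ps_atomicDom_of_subfield :
  subfield_of D -> atomicDom (@ps_mul L) (ps_one L) (ps_zero L) SS.
Proof.
move=> fD f Sf f0 uf; have [n fn] := ps_coef_neq0 f0.
have coef0_nonunit g : SS g -> ~ Sunit g -> g 0%N = 0.
  move=> Sg ug; apply/eqP/negPn/negP => g0; apply: ug; apply/ps_unitP => //.
  by split=> //; exists (g 0%N)^-1; split; [exact: fD | exact: mulfV].
apply: (atomic_by_descent (@ps_mulA L) (@ps_mulC L) (@ps_mul1 L) (@ps_mul0 L) psSM
  (Q := fun n f => f n != 0)) fn Sf f0 uf.
move=> {}n b c bcn Sb Sc _ ub uc.
apply: NNPP => no_b; move: bcn; rewrite ps_mul_coef_eq0 ?eqxx ?coef0_nonunit // => i lt_in.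
by apply/eqP/negPn/negP => bi; apply: no_b; exists i.
Qed.

Theorem ps_completelyAtomic_of_subfield :
  subfield_of D -> completelyAtomic (@ps_mul L) (ps_one L) (ps_zero L) SS.
Proof.
move=> fD; apply: (completelyAtomic_of_atomicDom (@ps_mul0 L)).
exact: ps_atomicDom_of_subfield.
Qed.

Theorem ps_completelyAtomic_of_atomicDom :
  ~ subfield_of D -> atomicDom *%R 1 0 DS ->
  completelyAtomic (@ps_mul L) (ps_one L) (ps_zero L) SS.
Proof.
move=> nfD atomicD.
apply: (completelyAtomic_of_ct (@ps_mulA L) (@ps_mulC L) (@ps_mul1 L) (@ps_mul0 L)
  (@ps_mul_coef0 L) psCK (@psCM L) psC1 inDXLXXE) => //.
- by move=> b c d Sb _ _ _ /(ps_unitP Sb).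
- by move=> f Sf uf /(ps_unitP Sf).
Qed.

End DPlusXL.

Theorem corollary3p2 (L : fieldType) (D : {pred L}) :
  GRing.subring_closed D ->
  let CA_R := completelyAtomic (@GRing.mul {poly L}) 1 0 (inDXLX D) in
  let CA_R' := completelyAtomic (@ps_mul L) (ps_one L) (ps_zero L) (inDXLXX D) in
  (subfield_of D -> CA_R /\ CA_R') /\
  (~ subfield_of D ->
     atomicDom (@GRing.mul L) 1 0 (fun x => x \in D) -> CA_R /\ CA_R').
Proof.
move=> DR CA_R CA_R'; split=> [fD | nfD atomicD]; split.
- exact: poly_completelyAtomic_of_subfield.
- exact: ps_completelyAtomic_of_subfield.
- exact: poly_completelyAtomic_of_atomicDom.
- exact: ps_completelyAtomic_of_atomicDom.
Qed.
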